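(* Let $s,m$ be positive integers with $m$ odd, $n=sm$, and let $k$ be a positive integer with $t=\gcd(n,k)$ such that $\mathbb{F}_{2^t}\subseteq\mathbb{F}_{2^s}$ (i.e. $t\mid s$). Let $g(x)=x^{2^k+1}$ on $\mathbb{F}_{2^n}$. Then for all $a\in\mathbb{F}_{2^s}\setminus\{0\}$ and $b\in\mathbb{F}_{2^s}$, the equation $g(x+a)+g(x)=b$ has no solution $x\in\mathbb{F}_{2^n}\setminus\mathbb{F}_{2^s}$. *)

From mathcomp Require Import all_boot all_algebra all_field.
Set Implicit Arguments. Unset Strict Implicit. Unset Printing Implicit Defensive.
Import GRing.Theory.
Local Open Scope ring_scope.

(* For a finite field F of characteristic 2 with #|F| = 2^n and s | n,
   the subfield F_{2^s} of F is the set of fixed points of x |-> x^(2^s). *)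
Definition in_subfield2 (F : finFieldType) (s : nat) (x : F) : bool :=
  x ^+ (2 ^ s) == x.

From mathcomp Require Import all_boot all_algebra all_field.
From mathcomp Require Import ring.
Import GRing.Theory.
Local Open Scope ring_scope.

(* Scaling by a reduces the equation to an Artin-Schreier equation
   y^(2^k) + y = c with c in F_(2^s), where y = x / a. Then z := y^(2^s) + y is
   fixed by x |-> x^(2^k) and by x |-> x^(2^(sm)) (the identity of F), hence by
   x |-> x^(2^t) with t = gcd(sm, k), hence z lies in F_(2^s). So the
   conjugates of y over F_(2^s) are y and y + z, and going once around the m
   conjugations gives y = y + m z = y + z since m is odd: z = 0 and x = a y
   lies in F_(2^s). *)

Section FixedPowers.
Context {R : pzSemiRingType}.

Lemma expr_fixed_expn (e r : nat) (x : R) : x ^+ e = x -> x ^+ (e ^ r) = x.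
Proof.
move=> xe; elim: r => [|r IHr]; first by rewrite expn0 expr1.
by rewrite expnSr exprM IHr xe.
Qed.

Lemma expr_fixed_gcdn (p i j : nat) (x : R) : (0 < i)%N ->
  x ^+ (p ^ i) = x -> x ^+ (p ^ j) = x -> x ^+ (p ^ gcdn i j) = x.
Proof.
move=> i_gt0 xi xj; have [a _ /dvdnP[d gE]] := Bezoutl j i_gt0.
have x_aj : x ^+ (p ^ (a * j)) = x by rewrite mulnC expnM expr_fixed_expn.
have x_di : x ^+ (p ^ (d * i)) = x by rewrite mulnC expnM expr_fixed_expn.
by rewrite -{2}x_di -gE addnC expnD exprM x_aj.
Qed.

End FixedPowers.

Section FrobeniusPowers.
Context {R : comNzRingType} {p : nat}.
Hypothesis pcharRp : p \in [pchar R].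

Lemma pchar_pnatX (n : nat) : [pchar R].-nat (p ^ n)%N.
Proof. by rewrite pnatX (pnatE _ (pcharf_prime pcharRp)) pcharRp. Qed.

Lemma exprDn_pcharX (n : nat) (x y : R) :
  (x + y) ^+ (p ^ n) = x ^+ (p ^ n) + y ^+ (p ^ n).
Proof. exact/exprDn_pchar/pchar_pnatX. Qed.

Lemma exprBn_pcharX (n : nat) (x y : R) :
  (x - y) ^+ (p ^ n) = x ^+ (p ^ n) - y ^+ (p ^ n).
Proof. by rewrite exprDn_pcharX (exprNn_pchar _ (pchar_pnatX n)). Qed.

Lemma frobenius_shift_iter (s j : nat) [y z : R] :
  y ^+ (p ^ s) = y + z -> z ^+ (p ^ s) = z -> y ^+ (p ^ (s * j)) = y + z *+ j.
Proof.
move=> ys zs; elim: j => [|j IHj]; first by rewrite muln0 expr1 addr0.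
rewrite mulnS expnD exprM ys exprDn_pcharX IHj expnM expr_fixed_expn //.
by rewrite mulrSr addrA.
Qed.

(* The additive maps x |-> x^(p^k) - x and x |-> x^(p^s) - x commute. *)
Lemma frobenius_sub_fixed (s k : nat) (y : R) :
  (y ^+ (p ^ k) - y) ^+ (p ^ s) = y ^+ (p ^ k) - y ->
  (y ^+ (p ^ s) - y) ^+ (p ^ k) = y ^+ (p ^ s) - y.
Proof.
rewrite !exprBn_pcharX -exprM mulnC exprM => /eqP; rewrite subr_eq => /eqP ->.
by ring.
Qed.

End FrobeniusPowers.

Section Char2Subfield.
Context {F : finFieldType}.
Hypothesis pcharF2 : 2 \in [pchar F].

Lemma in_subfield2_1 (s : nat) : in_subfield2 s (1 : F).
Proof. by rewrite /in_subfield2 expr1n. Qed.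

Lemma in_subfield2D [s : nat] [x y : F] :
  in_subfield2 s x -> in_subfield2 s y -> in_subfield2 s (x + y).
Proof.
by move=> /eqP xs /eqP ys; rewrite /in_subfield2 exprDn_pcharX // xs ys.
Qed.

Lemma in_subfield2M [s : nat] [x y : F] :
  in_subfield2 s x -> in_subfield2 s y -> in_subfield2 s (x * y).
Proof. by move=> /eqP xs /eqP ys; rewrite /in_subfield2 exprMn xs ys. Qed.

Lemma in_subfield2V [s : nat] [x : F] : in_subfield2 s x -> in_subfield2 s x^-1.
Proof. by move=> /eqP xs; rewrite /in_subfield2 exprVn xs. Qed.

Lemma in_subfield2X [s : nat] (n : nat) [x : F] :
  in_subfield2 s x -> in_subfield2 s (x ^+ n).
Proof. by move=> /eqP xs; rewrite /in_subfield2 exprAC xs. Qed.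

Lemma gold_diff_scaled (k : nat) (x a : F) : a != 0 ->
  (x + a) ^+ (2 ^ k + 1) + x ^+ (2 ^ k + 1)
    = a ^+ (2 ^ k + 1) * ((x / a) ^+ (2 ^ k) + x / a + 1).
Proof.
move=> a_neq0; set y := x / a; have -> : x = y * a by rewrite divfK.
clearbody y.
rewrite !exprD !expr1 exprDn_pcharX // !exprMn; apply/eqP; rewrite -subr_eq0.
set t := y ^+ (2 ^ k) * a ^+ (2 ^ k) * (y * a).
rewrite (_ : _ - _ = t + t); first by rewrite addrr_pchar2.
by rewrite /t; ring.
Qed.

Lemma gold_diff_in_subfield2 [s k : nat] [a b x : F] :
  in_subfield2 s a -> a != 0 -> in_subfield2 s b ->
  (x + a) ^+ (2 ^ k + 1) + x ^+ (2 ^ k + 1) = b ->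
  in_subfield2 s ((x / a) ^+ (2 ^ k) + x / a).
Proof.
move=> Fs_a a_neq0 Fs_b; rewrite gold_diff_scaled // => gold_b.
have aq_neq0 : a ^+ (2 ^ k + 1) != 0 by rewrite expf_neq0.
have -> : (x / a) ^+ (2 ^ k) + x / a = b / a ^+ (2 ^ k + 1) + 1.
  by rewrite -gold_b mulrAC mulfV // mul1r addrK_pchar2.
by rewrite in_subfield2D ?in_subfield2M ?in_subfield2V ?in_subfield2X
  ?in_subfield2_1.
Qed.

Lemma in_subfield2_odd_ext [s m : nat] [y : F] : odd m ->
  y ^+ (2 ^ (s * m)) = y -> in_subfield2 s (y ^+ (2 ^ s) + y) ->
  in_subfield2 s y.
Proof.
move=> m_odd ym /eqP zs; set z := _ + y in zs.
have ys : y ^+ (2 ^ s) = y + z by rewrite addrC addrK_pchar2.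
have := frobenius_shift_iter pcharF2 s m ys zs.
rewrite ym -mulr_natr -(GRing.natr_mod_pchar pcharF2) modn2 m_odd mulr1 => yz.
have z0 : z = 0 by apply: (addrI y); rewrite addr0 -yz.
by rewrite /in_subfield2 ys z0 addr0.
Qed.

End Char2Subfield.

Theorem proposition2p5 (F : finFieldType) (s m k : nat) :
  (0 < s)%N -> (0 < m)%N -> odd m -> (0 < k)%N ->
  (2 \in [pchar F])%N -> #|F| = (2 ^ (s * m))%N ->
  (gcdn (s * m) k %| s)%N ->
  forall a b : F, in_subfield2 s a -> a != 0 -> in_subfield2 s b ->
  forall x : F, ~~ in_subfield2 s x ->
    (x + a) ^+ (2 ^ k + 1) + x ^+ (2 ^ k + 1) != b.
Proof.
move=> s_gt0 m_gt0 m_odd _ pcharF2 cardF t_dvd_s a b Fs_a a_neq0 Fs_b x Fs'x.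
apply/negP => /eqP /(gold_diff_in_subfield2 pcharF2 Fs_a a_neq0 Fs_b) /eqP AS_y.
set y := x / a in AS_y.
have Fsm (w : F) : w ^+ (2 ^ (s * m)) = w by rewrite -cardF expf_card.
set z := y ^+ (2 ^ s) + y.
have z_k : z ^+ (2 ^ k) = z.
  have := frobenius_sub_fixed pcharF2 s k y.
  by rewrite (oppr_pchar2 pcharF2) => /(_ AS_y).
have z_t : z ^+ (2 ^ gcdn (s * m) k) = z.
  by apply: expr_fixed_gcdn; rewrite ?muln_gt0 ?s_gt0.
have Fs_z : in_subfield2 s z.
  apply/eqP; case/dvdnP: t_dvd_s => r ->.
  by rewrite mulnC expnM; apply: expr_fixed_expn.
have Fs_y := in_subfield2_odd_ext pcharF2 m_odd (Fsm y) Fs_z.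
by move: Fs'x; rewrite -(divfK a_neq0 x) -/y (in_subfield2M Fs_y Fs_a).
Qed.
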